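(* Consider $\dot y=Ay+B(u+\Delta(y,t))$, $y\in\mathbb{R}^{\bar n}$, $u\in\mathbb{R}^{\bar m}$, with constant $A\in\mathbb{R}^{\bar n\times\bar n}$, full-rank $B\in\mathbb{R}^{\bar n\times\bar m}$, and unknown $\Delta$ bounded by a known constant. Let $K\in\mathbb{R}^{\bar m\times\bar n}$ be such that $A^{cl}:=A+BK$ is Hurwitz. If $S\in\mathbb{R}^{\bar m\times\bar n}$ satisfies (1) $\det(SB)\neq0$ and (2) $Sy=0\Rightarrow SA^{cl}y=0$, then, when restricted to the manifold $\Sigma=\{y\in\mathbb{R}^{\bar n}: Sy=0\}$, the system experiences the equivalent control $u_{eq}=Ky-\Delta(y,t)$.
   Context: Equivalent control: the control $u_{eq}$ determined by requiring $S\dot y\equiv0$ along motions confined to $\Sigma$; motion in sliding mode evolves as the system with $u=u_{eq}$. *)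

From HB Require Import structures.
From mathcomp Require Import all_boot all_order all_algebra.
From mathcomp Require Import complex.
Set Implicit Arguments. Unset Strict Implicit. Unset Printing Implicit Defensive.
Import Order.TTheory GRing.Theory Num.Theory.
Local Open Scope ring_scope.

Definition hurwitz (R : rcfType) (n : nat) (A : 'M[R]_n) : Prop :=
  forall lambda : R[i],
    root (char_poly (map_mx (real_complex R) A)) lambda ->
    complex.Re lambda < 0.

Definition rhs (R : rcfType) (n m : nat) (A : 'M[R]_n) (B : 'M[R]_(n, m))
  (Delta : 'cV[R]_n -> R -> 'cV[R]_m) (y : 'cV[R]_n) (t : R) (u : 'cV[R]_m)
  : 'cV[R]_n :=
  A *m y + B *m (u + Delta y t).

Definition sliding_manifold (R : rcfType) (n m : nat) (S : 'M[R]_(m, n))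
  (y : 'cV[R]_n) : Prop := S *m y = 0.

Definition is_equiv_control (R : rcfType) (n m : nat) (A : 'M[R]_n)
  (B : 'M[R]_(n, m)) (Delta : 'cV[R]_n -> R -> 'cV[R]_m) (S : 'M[R]_(m, n))
  (y : 'cV[R]_n) (t : R) (u : 'cV[R]_m) : Prop :=
  S *m rhs A B Delta y t u = 0.

From HB Require Import structures.
From mathcomp Require Import all_boot all_order all_algebra.
From mathcomp Require Import complex.
Import Order.TTheory GRing.Theory Num.Theory.
Local Open Scope ring_scope.

(* On Sigma, condition (2) kills the closed-loop drift S A^cl y, so
   S dy/dt = (S B) (u + Delta - K y); invertibility of S B then forces
   u + Delta - K y = 0. *)

Lemma unitmx_mul_eq0 (R : comUnitRingType) (n p : nat)
  (M : 'M[R]_n) (v : 'M[R]_(n, p)) :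
  M \in unitmx -> (M *m v == 0) = (v == 0).
Proof.
move=> unitM; apply/eqP/eqP => [Mv0 | ->]; last exact: mulmx0.
by rewrite -(mulKmx unitM v) Mv0 mulmx0.
Qed.

Lemma mulmx_drift_closed_loop {R : pzRingType} {n m : nat}
  (A : 'M[R]_n) (B : 'M[R]_(n, m)) (K S : 'M[R]_(m, n))
  (y : 'cV[R]_n) (v : 'cV[R]_m) :
  S *m (A *m y + B *m v) = S *m ((A + B *m K) *m y) + S *m B *m (v - K *m y).
Proof.
rewrite mulmxDl !mulmxDr mulmxN !mulmxA.
by rewrite addrACA subrr addr0.
Qed.

Lemma is_equiv_controlE {R : rcfType} {n m : nat}
  (A : 'M[R]_n) (B : 'M[R]_(n, m)) (K S : 'M[R]_(m, n))
  (Delta : 'cV[R]_n -> R -> 'cV[R]_m) (y : 'cV[R]_n) (t : R) (u : 'cV[R]_m) :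
  S *m ((A + B *m K) *m y) = 0 ->
  is_equiv_control A B Delta S y t u <->
  S *m B *m (u + Delta y t - K *m y) = 0.
Proof.
move=> drift0.
by rewrite /is_equiv_control /rhs (mulmx_drift_closed_loop A B K) drift0 add0r.
Qed.

Theorem lemma1 (R : rcfType) (n m : nat)
  (A : 'M[R]_n) (B : 'M[R]_(n, m)) (K : 'M[R]_(m, n)) (S : 'M[R]_(m, n))
  (Delta : 'cV[R]_n -> R -> 'cV[R]_m)
  (hB : \rank B = m)
  (hDelta : exists M : R, forall (y : 'cV[R]_n) (t : R) (i : 'I_m),
              `|Delta y t i 0| <= M)
  (hK : hurwitz (A + B *m K))
  (h1 : \det (S *m B) != 0)
  (h2 : forall y : 'cV[R]_n, S *m y = 0 -> S *m ((A + B *m K) *m y) = 0) :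
  forall (y : 'cV[R]_n) (t : R), sliding_manifold S y ->
    forall u : 'cV[R]_m,
      is_equiv_control A B Delta S y t u <-> u = K *m y - Delta y t.
Proof.
move=> y t y_in_Sigma u.
have unitSB : S *m B \in unitmx by rewrite unitmxE unitfE.
rewrite (is_equiv_controlE A B K S Delta y t u (h2 _ y_in_Sigma)).
rewrite (rwP eqP) unitmx_mul_eq0 // subr_eq0.
split => [/eqP <- | ->]; first by rewrite addrK.
by rewrite subrK eqxx.
Qed.
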